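(* Fix $y_1\in T_2$ and for each integer $m>1$ set $$\Theta_m(y_1):=\Big\{y\in T_2:\ \beta(y,y_1)\in\Big[\frac{\pi}{2}-\frac1m,\frac{\pi}{2}\Big]\Big\}.$$ Unless $\Theta_m(y_1)$ is empty for all sufficiently large $m$, there exist $M>0$ and $K>0$ such that $$|s^+(y_1)-s^+(y)|\ge K|y_1-y|\qquad\text{for all } y\in\Theta_m(y_1)\text{ and all } m>M.$$
   Context: Setting. $n>1$, $\mathbf S^n$ the unit sphere in $\mathbf R^{n+1}$; $(\mu,\nu)$ symmetrically suitable Borel probability measures on $\mathbf S^n$ (there is $\epsilon>0$ with $\epsilon\mathcal H^n\le\mu,\nu\le\epsilon^{-1}\mathcal H^n$). For optimal transport with cost $|x-y|^2$, by Gangbo–McCann there is a convex potential $\psi$ with homeomorphism $t^+:\mathbf S^n\to\mathbf S^n$, its inverse $s^+:=(t^+)^{-1}$, a bivalent target set $T_2\subset\mathbf S^n$ and a continuous injective map $s^-:T_2\to\mathbf S^n$ such that for $y\in T_2$: $s^+(y)\ne s^-(y)$, $y\cdot s^+(y)>0$, $y\cdot s^-(y)<0$, and $s^+(y)-s^-(y)=\omega(y)y$ with $\omega(y)>0$; moreover $(s^-(y_1)-s^-(y_0))\cdot(y_1-y_0)\ge0$ for $y_0,y_1\in T_2$ (monotonicity of $\partial\psi$). For $y,y_1\in T_2$ with $y\ne\pm y_1$, $\beta(y,y_1)$ denotes the angle $\arccos\frac{a\cdot b}{|a||b|}$ between $a=y_1-y$ and $b=\omega(y_1)y_1-\omega(y)y$.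 *)

From HB Require Import structures.
From mathcomp Require Import all_boot all_order all_algebra.
From mathcomp Require Import all_classical all_reals all_analysis.
Set Implicit Arguments. Unset Strict Implicit. Unset Printing Implicit Defensive.
Import Order.TTheory GRing.Theory Num.Theory.
Import numFieldNormedType.Exports.
Local Open Scope ring_scope.
Local Open Scope classical_set_scope.

Section Defs.
Variables (R : realType) (k : nat).

Definition dotv (u v : 'rV[R]_k) : R := \sum_(i < k) u 0 i * v 0 i.
Definition enorm (u : 'rV[R]_k) : R := Num.sqrt (dotv u u).

Definition usphere : set 'rV[R]_k := [set x | enorm x = 1].

Definition angle (a b : 'rV[R]_k) : R := acos (dotv a b / (enorm a * enorm b)).
End Defs.
Arguments usphere {R k}.

Definition beta (R : realType) (k : nat) (omega : 'rV[R]_k -> R) (y y1 : 'rV[R]_k) : R :=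
  angle (y1 - y) (omega y1 *: y1 - omega y *: y).

(* Theta_m(y1) = { y in T2 : beta(y,y1) in [pi/2 - 1/m, pi/2] }, with y <> +-y1
   (beta is only defined for y <> +-y1) *)
Definition Theta (R : realType) (k : nat) (T2 : set 'rV[R]_k) (omega : 'rV[R]_k -> R)
  (y1 : 'rV[R]_k) (m : nat) : set 'rV[R]_k :=
  [set y | T2 y /\ y <> y1 /\ y <> - y1 /\
           pi / 2 - (m%:R)^-1 <= beta omega y y1 <= pi / 2].

From HB Require Import structures.
From mathcomp Require Import all_boot all_order all_algebra.
From mathcomp Require Import all_classical all_reals all_analysis.
From mathcomp Require Import ring lra.
Import Order.TTheory GRing.Theory Num.Theory.
Import numFieldNormedType.Exports.
Local Open Scope ring_scope.
Local Open Scope classical_set_scope.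

(* Writing [s^+ = s^- + omega id] on [T2], the increment
   [D = s^+(y1) - s^+(y)] satisfies
   [D.(y1 - y) = (s^-(y1) - s^-(y)).(y1 - y) + (omega y1 y1 - omega y y).(y1 - y)];
   the first term is nonnegative by monotonicity of [s^-], and on the unit sphere
   the second one equals [(omega y1 + omega y)/2 |y1 - y|^2].  Hence
   [D.(y1 - y) >= omega y1 / 2 |y1 - y|^2], which gives
   [|D| >= omega y1 / 2 |y1 - y|], so [K = omega y1 / 2] works for every [m]. *)

Section DotProduct.
Context {R : realType} {k : nat}.
Implicit Types (u v w : 'rV[R]_k) (a : R).

Lemma dotvC u v : dotv u v = dotv v u.
Proof. by apply: eq_bigr => i _; rewrite mulrC. Qed.

Lemma dotvDl u v w : dotv (u + v) w = dotv u w + dotv v w.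
Proof. by rewrite /dotv -big_split; apply: eq_bigr => i _; rewrite !mxE mulrDl. Qed.

Lemma dotvNl u w : dotv (- u) w = - dotv u w.
Proof. by rewrite /dotv -sumrN; apply: eq_bigr => i _; rewrite !mxE mulNr. Qed.

Lemma dotvBl u v w : dotv (u - v) w = dotv u w - dotv v w.
Proof. by rewrite dotvDl dotvNl. Qed.

Lemma dotvZl a u w : dotv (a *: u) w = a * dotv u w.
Proof. by rewrite /dotv mulr_sumr; apply: eq_bigr => i _; rewrite !mxE mulrA. Qed.

Lemma dotvBr u v w : dotv w (u - v) = dotv w u - dotv w v.
Proof. by rewrite dotvC dotvBl !(dotvC w). Qed.

Lemma dotvZr a u w : dotv w (a *: u) = a * dotv w u.
Proof. by rewrite dotvC dotvZl dotvC. Qed.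

Lemma dotvv_ge0 u : 0 <= dotv u u.
Proof. by apply: sumr_ge0 => i _; rewrite -expr2 sqr_ge0. Qed.

Lemma enorm_ge0 u : 0 <= enorm u.
Proof. exact: sqrtr_ge0. Qed.

Lemma enorm_sqr u : enorm u ^+ 2 = dotv u u.
Proof. by rewrite sqr_sqrtr // dotvv_ge0. Qed.

Lemma usphere_dotvv u : usphere u -> dotv u u = 1.
Proof. by move=> u1; rewrite -enorm_sqr u1 expr1n. Qed.

(* Expanding [|u - K v|^2 >= 0] avoids Cauchy-Schwarz. *)
Lemma enorm_ge_of_dotv (K : R) u v :
  0 <= K -> K * dotv v v <= dotv u v -> K * enorm v <= enorm u.
Proof.
move=> K_ge0 proj_ge.
have sqr_ge0 := dotvv_ge0 (u - K *: v).
rewrite !dotvBl !dotvBr !dotvZl !dotvZr (dotvC v u) in sqr_ge0.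
have Kproj_ge : 0 <= K * (dotv u v - K * dotv v v).
  by apply: mulr_ge0 => //; rewrite subr_ge0.
rewrite -ler_sqr ?nnegrE ?mulr_ge0 ?enorm_ge0 // exprMn !enorm_sqr.
nra.
Qed.

Lemma usphere_dotv_combination a b u v : usphere u -> usphere v ->
  dotv (a *: u - b *: v) (u - v) = (a + b) / 2 * dotv (u - v) (u - v).
Proof.
move=> /usphere_dotvv u1 /usphere_dotvv v1.
rewrite !dotvBl !dotvBr !dotvZl (dotvC v u) u1 v1.
by field.
Qed.

End DotProduct.

Section Expansion.
Context {R : realType} {k : nat}.
Context {T2 : set 'rV[R]_k} {sp sm : 'rV[R]_k -> 'rV[R]_k} {omega : 'rV[R]_k -> R}.
Hypothesis T2_sph : T2 `<=` usphere.
Hypothesis omega_pos : forall y, T2 y -> 0 < omega y.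
Hypothesis sp_sm_omega : forall y, T2 y -> sp y - sm y = omega y *: y.
Hypothesis sm_mono :
  forall y0 y1, T2 y0 -> T2 y1 -> 0 <= dotv (sm y1 - sm y0) (y1 - y0).

Lemma sp_increment y y1 : T2 y -> T2 y1 ->
  sp y1 - sp y = (sm y1 - sm y) + (omega y1 *: y1 - omega y *: y).
Proof.
move=> Ty Ty1.
rewrite -(sp_sm_omega _ Ty) -(sp_sm_omega _ Ty1).
by rewrite opprB addrACA [sm y1 + _]addrCA subrr addr0 addKr.
Qed.

Lemma sp_expanding y y1 : T2 y -> T2 y1 ->
  omega y1 / 2 * enorm (y1 - y) <= enorm (sp y1 - sp y).
Proof.
move=> Ty Ty1.
have w_pos := omega_pos _ Ty; have w1_pos := omega_pos _ Ty1.
apply: enorm_ge_of_dotv; first by rewrite divr_ge0 // ltW.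
rewrite sp_increment // [leRHS]dotvDl.
rewrite usphere_dotv_combination; [|exact: T2_sph Ty1|exact: T2_sph Ty].
have := sm_mono _ _ Ty Ty1; have := dotvv_ge0 (y1 - y).
nra.
Qed.

End Expansion.

Theorem lemma6p9 (R : realType) (n : nat) (hn : (1 < n)%N)
  (tp sp : 'rV[R]_(n.+1) -> 'rV[R]_(n.+1))
  (T2 : set 'rV[R]_(n.+1)) (sm : 'rV[R]_(n.+1) -> 'rV[R]_(n.+1))
  (omega : 'rV[R]_(n.+1) -> R)
  (* t^+ : S^n -> S^n homeomorphism with inverse s^+ *)
  (tp_sph : forall x, usphere x -> usphere (tp x))
  (sp_sph : forall y, usphere y -> usphere (sp y))
  (sp_tp : forall x, usphere x -> sp (tp x) = x)
  (tp_sp : forall y, usphere y -> tp (sp y) = y)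
  (tp_cont : {within usphere, continuous tp})
  (sp_cont : {within usphere, continuous sp})
  (* bivalent target set and s^- : T2 -> S^n continuous injective *)
  (T2_sph : T2 `<=` usphere)
  (sm_sph : forall y, T2 y -> usphere (sm y))
  (sm_cont : {within T2, continuous sm})
  (sm_inj : {in T2 &, injective sm})
  (sp_ne_sm : forall y, T2 y -> sp y <> sm y)
  (sp_pos : forall y, T2 y -> 0 < dotv y (sp y))
  (sm_neg : forall y, T2 y -> dotv y (sm y) < 0)
  (omega_pos : forall y, T2 y -> 0 < omega y)
  (sp_sm_omega : forall y, T2 y -> sp y - sm y = omega y *: y)
  (sm_mono : forall y0 y1, T2 y0 -> T2 y1 -> 0 <= dotv (sm y1 - sm y0) (y1 - y0))
  (y1 : 'rV[R]_(n.+1)) (hy1 : T2 y1) :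
  ~ (exists M0 : nat, forall m : nat, (M0 < m)%N -> Theta T2 omega y1 m = set0) ->
  exists M : R, exists K : R, 0 < M /\ 0 < K /\
    forall m : nat, (1 < m)%N -> M < m%:R ->
      forall y, Theta T2 omega y1 m y ->
        K * enorm (y1 - y) <= enorm (sp y1 - sp y).
Proof.
move=> _; exists 1, (omega y1 / 2); split => //.
split; first by rewrite divr_gt0 // omega_pos.
move=> m _ _ y [Ty _].
exact: (sp_expanding T2_sph omega_pos sp_sm_omega sm_mono _ _ Ty hy1).
Qed.
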